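(* Let $G$ be a graph of order $n\ge1$. Then $\operatorname{zir}(G)=1$ if and only if $G\cong P_n$ or $G\cong K_{1,n-1}$.
   Context: $P_n$ is the path on $n$ vertices, $K_{1,n-1}$ the star. A nonempty $F\subseteq V(G)$ is a fort if every $v\notin F$ has $|N(v)\cap F|\ne1$. A private fort of $x\in S$ relative to $S$ is a fort $F$ with $S\cap F=\{x\}$; $S$ is a ZIr-set if every element of $S$ has a private fort. $\operatorname{zir}(G)$ is the minimum cardinality of an inclusion-maximal ZIr-set. *)

(* A simple graph on a finite vertex type T is a
   symmetric irreflexive boolean relation e : rel T. *)
From mathcomp Require Import all_boot.
Set Implicit Arguments. Unset Strict Implicit. Unset Printing Implicit Defensive.

Section Zir.
Variables (T : finType) (e : rel T).

Definition nbhd (v : T) : {set T} := [set u | e v u].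

Definition fort (F : {set T}) : bool :=
  (F != set0) && [forall v, (v \notin F) ==> (#|nbhd v :&: F| != 1)].

Definition private_fort (S : {set T}) (x : T) (F : {set T}) : bool :=
  fort F && (S :&: F == [set x]).

Definition ZIr_set (S : {set T}) : bool :=
  [forall x in S, exists F : {set T}, private_fort S x F].

Definition maximal_ZIr_set (S : {set T}) : bool := maxset ZIr_set S.

(* zir(G): minimum cardinality of an inclusion-maximal ZIr-set
   (#|T| is a valid upper bound / default, since every set has size <= #|T|) *)
Definition zir : nat :=
  \big[minn/#|T|]_(S : {set T} | maximal_ZIr_set S) #|S|.

End Zir.

Definition path_rel (n : nat) : rel 'I_n :=
  fun i j => (i.+1 == j :> nat) || (j.+1 == i :> nat).

Definition star_rel (n : nat) : rel 'I_n :=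
  fun i j => (i != j) && ((i == 0 :> nat) || (j == 0 :> nat)).

Definition graph_iso (T T' : finType) (e : rel T) (e' : rel T') : Prop :=
  exists f : T -> T', bijective f /\ forall x y, e x y = e' (f x) (f y).

(* A singleton {x} is a maximal ZIr-set iff no y <> x is separated from x by
   forts in both directions; zir = 1 iff some singleton is maximal. In P_n every
   fort contains an end vertex, and in K_{1,n-1} every fort containing the centre
   is everything. Conversely, for such an x, if the complement of some C
   containing x is a fort, every vertex outside C lies in every fort containing
   x; as complements of non-leaves, and of a leaf together with a neighbour of
   degree <> 2, are forts, every vertex outside C is a leaf hanging on C. Taking
   C = {x} gives a star when deg x <> 1. When deg x = 1, walk from x: while the
   walk does not exhaust G, its last vertex has exactly one new neighbour, since
   otherwise the complement of the walk is a fort and the leaves hanging on the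
   last vertex would give it degree at least 3. *)
From mathcomp Require Import all_boot order fingroup perm.
Set Implicit Arguments. Unset Strict Implicit. Unset Printing Implicit Defensive.
Import Order.TTheory.

Section Forts.
Variables (T : finType) (e : rel T).
Hypotheses (e_sym : symmetric e) (e_irr : irreflexive e).

Lemma in_nbhd u v : (v \in nbhd e u) = e u v.
Proof. by rewrite inE. Qed.

Lemma fortT (x : T) : fort e setT.
Proof.
by apply/andP; split; [apply/set0Pn; exists x | apply/forallP => v; rewrite inE].
Qed.

Lemma fort_setC (W : {set T}) : ~: W != set0 ->
  {in W, forall w, #|nbhd e w :\: W| != 1} -> fort e (~: W).
Proof.
move=> W'_neq0 HW; apply/andP; split=> //; apply/forall_inP => v.
by rewrite inE negbK -setDE; apply: HW.
Qed.

Lemma fort_setC1 y : ~: [set y] != set0 -> #|nbhd e y| != 1 -> fort e (~: [set y]).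
Proof.
move=> y'_neq0 deg_y; apply: fort_setC => // w /set1P ->.
suff -> : nbhd e y :\: [set y] = nbhd e y by [].
by apply/setDidPl; rewrite disjoint_sym disjoints1 in_nbhd e_irr.
Qed.

Lemma fort_setC2 y w : ~: [set y; w] != set0 ->
  nbhd e y = [set w] -> #|nbhd e w| != 2 -> fort e (~: [set y; w]).
Proof.
move=> yw'_neq0 Ny deg_w; apply: fort_setC => // u /set2P[-> | ->].
  by rewrite Ny (_ : _ :\: _ = set0) ?cards0 //; apply/eqP; rewrite setD_eq0 sub1set set22.
have yNw : y \in nbhd e w by rewrite in_nbhd e_sym -in_nbhd Ny set11.
suff -> : nbhd e w :\: [set y; w] = nbhd e w :\ y.
  by move: deg_w; rewrite (cardsD1 y) yNw; case: #|_|.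
by apply/setP => v; rewrite !inE; case: (eqVneq v w) => [->|]; rewrite ?e_irr ?andbF ?orbF.
Qed.

Definition fort_separates (a b : T) : bool :=
  [exists F, [&& fort e F, a \in F & b \notin F]].

Lemma fort_separatesP a b F : fort e F -> a \in F -> b \notin F -> fort_separates a b.
Proof. by move=> fF aF bF; apply/existsP; exists F; rewrite fF aF. Qed.

Lemma ZIr_set1 x : ZIr_set e [set x].
Proof.
apply/forall_inP => _ /set1P ->; apply/existsP; exists setT.
by rewrite /private_fort (fortT x) setIT eqxx.
Qed.

Lemma private_fort_separates S a b F :
  private_fort e S a F -> b \in S -> b != a -> fort_separates a b.
Proof.
move=> /andP[fF /eqP SF] bS ba; apply: (fort_separatesP fF).
  by have /setIP[] : a \in S :&: F by rewrite SF set11.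
by apply: contraNN ba => bF; rewrite -in_set1 -SF inE bS.
Qed.

Lemma ZIr_set2 x y : fort_separates x y -> fort_separates y x -> ZIr_set e [set x; y].
Proof.
move=> /existsP[F /and3P[fF xF yF]] /existsP[G /and3P[fG yG xG]].
apply/forall_inP => z /set2P[]->; apply/existsP; [exists F | exists G];
  rewrite /private_fort ?fF ?fG /=; apply/eqP/setP => v; rewrite !inE.
  case: (eqVneq v x) => [->|_]; first by rewrite xF.
  by case: (eqVneq v y) => [->|]; rewrite ?(negbTE yF).
case: (eqVneq v y) => [->|_]; first by rewrite yG orbT.
by case: (eqVneq v x) => [->|]; rewrite ?(negbTE xG).
Qed.

Lemma maximal_ZIr_set1P x : maximal_ZIr_set e [set x] <->
  (forall y, y != x -> ~~ (fort_separates x y && fort_separates y x)).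
Proof.
split=> [/maxsetP[_ max_x] y yx | undom].
  apply/andP => -[sep_xy sep_yx].
  have := max_x _ (ZIr_set2 sep_xy sep_yx); rewrite subsetUl => /(_ isT) /setP/(_ y).
  by rewrite !inE eqxx orbT (negbTE yx).
apply/maxsetP; split=> [|S ZS]; first exact: ZIr_set1.
rewrite sub1set => xS; apply/eqP; rewrite eqEsubset sub1set xS andbT.
apply/subsetP => y yS; rewrite inE; apply: contraT => yx.
have [F pF] := existsP (forall_inP ZS x xS); have [G pG] := existsP (forall_inP ZS y yS).
by move: (undom y yx); rewrite (private_fort_separates pF yS yx)
  (private_fort_separates pG xS) // eq_sym.
Qed.

(* [minn] is convertible to [Order.min] on [nat], so the order-theoretic
   [bigmin] lemmas apply to [zir]. *)
Lemma zir_attained : exists2 S, maximal_ZIr_set e S & #|S| = zir e.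
Proof.
have ZIr0 : ZIr_set e set0 by apply/forall_inP => z; rewrite inE.
have [A maxA _] := maxset_exists ZIr0.
have [S maxS zirS] := @eq_bigmin _ nat _ #|T| A (maximal_ZIr_set e) (fun S => #|S|) maxA
  (fun S _ => max_card S).
by exists S => //; exact: esym zirS.
Qed.

Lemma zir_eq1P : zir e = 1 <-> exists x, maximal_ZIr_set e [set x].
Proof.
have [S maxS cardS] := zir_attained.
split=> [zir1 | [x max_x]].
  have /cards1P[x defS] : #|S| == 1 by rewrite cardS zir1.
  by exists x; rewrite -defS.
have zir_le1 : zir e <= #|[set x]| := @bigmin_le_cond _ nat _ _ _ _ _ max_x.
have S_neq0 : S != set0.
  apply: contraTneq maxS => ->; apply/maxsetP => -[_ /(_ _ (ZIr_set1 x))].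
  by rewrite sub0set => /(_ isT) /setP /(_ x); rewrite !inE eqxx.
by apply/eqP; rewrite eqn_leq -{1}(cards1 x) zir_le1 -cardS card_gt0.
Qed.

Lemma graph_iso_ordP n (r : rel 'I_n) :
  graph_iso e r <-> exists2 g : 'I_n -> T, bijective g & {mono g : i j / r i j >-> e i j}.
Proof.
split=> [[f [[g fK gK] ef]] | [g [g' gK g'K] eg]].
  by exists g => [|i j]; [exists f | rewrite ef !gK].
by exists g'; split=> [|u v]; [exists g | rewrite -{1}[u]g'K -{1}[v]g'K eg].
Qed.

Lemma ord0_enum n x : #|T| = n.+1 -> exists2 g : 'I_n.+1 -> T, injective g & g ord0 = x.
Proof.
move=> cardT; pose h (i : 'I_n.+1) := enum_val (cast_ord (esym cardT) i).
have h_inj : injective h by move=> i j /enum_val_inj /cast_ord_inj.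
exists (h \o tperm ord0 (cast_ord cardT (enum_rank x))).
  exact: inj_comp h_inj (@perm_inj _ _).
by rewrite /= tpermL /h cast_ordK enum_rankK.
Qed.

Lemma star_iso n x : #|T| = n.+1 ->
  (forall u v, e u v = (u != v) && ((u == x) || (v == x))) -> graph_iso e (@star_rel n.+1).
Proof.
move=> cardT e_star; have [g g_inj g0] := ord0_enum x cardT.
apply/graph_iso_ordP; exists g => [|i j]; last by rewrite e_star -g0 !(inj_eq g_inj).
by apply: inj_card_bij g_inj _; rewrite card_ord cardT.
Qed.

Lemma path_end_in_fort n (g : 'I_n.+1 -> T) F :
  bijective g -> {mono g : i j / path_rel i j >-> e i j} -> fort e F -> g ord0 \in F.
Proof.
move=> [g' gK g'K] eg /andP[F_neq0 /forall_inP fortF].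
apply: contraTT F_neq0 => g0F; rewrite negbK; apply/eqP/setP => u; rewrite inE -[u]g'K.
suff notF m (i : 'I_n.+1) : i <= m -> g i \notin F by apply/negbTE/notF.
elim: m i => [|m IH] i.
  by rewrite leqn0 => /eqP i0; rewrite (_ : i = ord0) //; apply: val_inj.
rewrite leq_eqVlt ltnS => /orP[/eqP im | /IH //].
have m_lt : m < n.+1 by apply: ltnW; rewrite -im ltn_ord.
apply/negP => giF; have := fortF _ (IH (Ordinal m_lt) (leqnn m)).
suff -> : nbhd e (g (Ordinal m_lt)) :&: F = [set g i] by rewrite cards1.
apply/setP => v; rewrite !inE -[v]g'K eg (inj_eq (can_inj gK)).
case: (eqVneq (g' v) i) => [-> | vi]; first by rewrite giF /path_rel /= im eqxx.
rewrite /path_rel /=; apply/negbTE/andP => -[/orP[/eqP mv | /eqP vm] gvF].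
  by case/eqP: vi; apply: val_inj; rewrite /= -mv.
by move: gvF; rewrite (negbTE (IH _ _)) // -vm leqnSn.
Qed.

Lemma path_end_maximal n (g : 'I_n.+1 -> T) :
  bijective g -> {mono g : i j / path_rel i j >-> e i j} -> maximal_ZIr_set e [set g ord0].
Proof.
move=> g_bij eg; apply/maximal_ZIr_set1P => y _.
apply/negP => /andP[_ /existsP[F /and3P[fF _ /negP[]]]].
exact: path_end_in_fort g_bij eg fF.
Qed.

Lemma star_center_fort n (g : 'I_n.+1 -> T) F :
  bijective g -> {mono g : i j / star_rel i j >-> e i j} -> fort e F -> g ord0 \in F ->
  F = setT.
Proof.
move=> [g' gK g'K] eg /andP[_ /forall_inP fortF] g0F; apply/setP => u.
rewrite inE -[u]g'K; set i := g' u; apply: contraT => giF; have := fortF _ giF.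
suff -> : nbhd e (g i) :&: F = [set g ord0] by rewrite cards1.
have i0 : (i == 0 :> nat) = false.
  by apply: contraNF giF => /eqP i0; rewrite (_ : i = ord0) //; apply: val_inj.
apply/setP => v; rewrite !inE -[v]g'K eg (inj_eq (can_inj gK)) /star_rel i0 /=.
case: (eqVneq (g' v) ord0) => [-> | v0].
  by rewrite g0F eqxx !andbT; apply: contraFneq i0 => ->.
rewrite (_ : (g' v == 0 :> nat) = false) ?andbF //.
by apply: contraNF v0 => /eqP v0; apply/eqP/val_inj.
Qed.

Lemma star_center_maximal n (g : 'I_n.+1 -> T) :
  bijective g -> {mono g : i j / star_rel i j >-> e i j} -> maximal_ZIr_set e [set g ord0].
Proof.
move=> g_bij eg; apply/maximal_ZIr_set1P => y _.
apply/negP => /andP[/existsP[F /and3P[fF g0F yF]] _].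
by move: yF; rewrite (star_center_fort g_bij eg fF g0F) inE.
Qed.

Section Undominated.
Variable x : T.
Hypothesis undom : forall y, y != x -> ~~ (fort_separates x y && fort_separates y x).

Lemma separates_of_deg y : y != x -> #|nbhd e y| != 1 -> fort_separates x y.
Proof.
move=> yx deg_y; have xC : x \in ~: [set y] by rewrite !inE eq_sym.
have fC : fort e (~: [set y]) by apply: fort_setC1 => //; apply/set0Pn; exists x.
by apply: fort_separatesP fC xC _; rewrite !inE eqxx.
Qed.

Lemma separates_of_pendant y w : x \notin [set y; w] ->
  nbhd e y = [set w] -> #|nbhd e w| != 2 -> fort_separates x y.
Proof.
move=> xyw Ny deg_w; have xC : x \in ~: [set y; w] by rewrite inE.
have fC : fort e (~: [set y; w]) by apply: fort_setC2 => //; apply/set0Pn; exists x.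
by apply: fort_separatesP fC xC _; rewrite !inE eqxx.
Qed.

Lemma no_separation_outside (C : {set T}) y :
  x \in C -> fort e (~: C) -> y \notin C -> ~~ fort_separates x y.
Proof.
move=> xC fC yC; have yx : y != x by apply: contraNneq yC => ->.
have sep_yx : fort_separates y x by apply: fort_separatesP fC _ _; rewrite inE ?yC ?xC.
by move: (undom yx); rewrite sep_yx andbT.
Qed.

Lemma pendant_outside (C : {set T}) y : x \in C -> fort e (~: C) -> y \notin C ->
  exists2 z, z \in C & nbhd e y = [set z].
Proof.
move=> xC fC yC; have nsep := no_separation_outside xC fC.
have notin_x v : v \notin C -> v != x by move=> vC; apply: contraNneq vC => ->.
have deg1 v : v \notin C -> #|nbhd e v| == 1.
  by move=> vC; apply: contraR (nsep v vC); apply: separates_of_deg; apply: notin_x.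
have /cards1P[z Ny] := deg1 y yC; exists z => //; apply: contraT => zC.
have /cards1P[u Nz] := deg1 z zC.
have yNz : y \in nbhd e z by rewrite in_nbhd e_sym -in_nbhd Ny set11.
move: yNz; rewrite Nz => /set1P yu; subst u.
have xyz : x \notin [set y; z].
  by rewrite !inE negb_or !(eq_sym x) (notin_x y yC) (notin_x z zC).
by move: (nsep y yC); rewrite (separates_of_pendant xyz Ny) // Nz cards1.
Qed.

Lemma star_of_undominated : #|nbhd e x| != 1 ->
  forall u v, e u v = (u != v) && ((u == x) || (v == x)).
Proof.
move=> deg_x; have leaf y : y != x -> e y =1 pred1 x.
  move=> yx v; have yC : y \notin [set x] by rewrite inE.
  have fC : fort e (~: [set x]) by apply: fort_setC1 => //; apply/set0Pn; exists y; rewrite inE.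
  by have [_ /set1P -> Ny] := pendant_outside (set11 x) fC yC; rewrite -in_nbhd Ny inE.
move=> u v; case: (eqVneq u x) => [->|ux] /=; last first.
  by rewrite leaf //=; case: (eqVneq v x) => [->|]; rewrite ?ux ?andbF.
by case: (eqVneq v x) => [->|vx]; rewrite ?e_irr // e_sym leaf //= eqxx.
Qed.

Definition path_vertices k (p : nat -> T) : {set T} := [set p i | i : 'I_k.+1].

Lemma path_verticesP k p u :
  reflect (exists2 i, i <= k & u = p i) (u \in path_vertices k p).
Proof.
apply: (iffP imsetP) => [[i _ ->] | [i ik ->]]; first by exists i => //; rewrite -ltnS ltn_ord.
by exists (Ordinal (ik : i < k.+1)).
Qed.

Definition hanging_path k (p : nat -> T) : Prop :=
  [/\ p 0 = x, {in [pred i | i <= k] &, injective p},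
      forall i j, i <= k -> j <= k -> e (p i) (p j) = (i.+1 == j) || (j.+1 == i)
    & forall i, i < k -> nbhd e (p i) \subset path_vertices k p].

Lemma hanging_path_extend k p z : hanging_path k p ->
  nbhd e (p k) :\: path_vertices k p = [set z] ->
  hanging_path k.+1 (fun i => if i <= k then p i else z).
Proof.
move=> [p0 p_inj p_adj p_closed] Dz; set q := fun i => if i <= k then p i else z.
have /setDP[zNpk zC] : z \in nbhd e (p k) :\: path_vertices k p by rewrite Dz set11.
have qE i : i <= k -> q i = p i by rewrite /q => ->.
have qk1 : q k.+1 = z by rewrite /q ltnn.
have split_k1 i : i <= k.+1 -> i = k.+1 \/ i <= k.
  by rewrite leq_eqVlt ltnS => /orP[/eqP|]; [left | right].
have ez j : j <= k -> e (p j) z = (j == k).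
  move=> jk; case: (eqVneq j k) => [->|jnk]; first by rewrite -in_nbhd.
  have jk' : j < k by rewrite ltn_neqAle jnk.
  by apply: contraNF zC => ezj; apply: (subsetP (p_closed j jk')); rewrite in_nbhd.
have pC j : j <= k -> p j \in path_vertices k p by move=> jk; apply/path_verticesP; exists j.
split.
- by rewrite qE.
- move=> i j; rewrite !inE => /split_k1[-> | ik] /split_k1[-> | jk] //; rewrite ?qk1 ?qE //.
  + by move=> zpj; move: zC; rewrite zpj pC.
  + by move=> pjz; move: zC; rewrite -pjz pC.
  + by apply: p_inj; rewrite inE.
- move=> i j /split_k1[-> | ik] /split_k1[-> | jk]; rewrite ?qk1 ?qE //.
  + by rewrite e_irr eqn_leq ltnn.
  + by rewrite e_sym ez // eqSS (@gtn_eqF j k.+2 (leqW jk)).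
  + by rewrite ez // eqSS (@gtn_eqF i k.+2 (leqW ik)) orbF.
  + exact: p_adj.
have C_sub : path_vertices k p \subset path_vertices k.+1 q.
  apply/subsetP => _ /path_verticesP[j jk ->]; apply/path_verticesP.
  by exists j; rewrite ?qE ?leqW.
move=> i; rewrite ltnS => ik; rewrite qE //.
case: (eqVneq i k) => [-> | ink]; last first.
  by apply: subset_trans (p_closed i _) C_sub; rewrite ltn_neqAle ink.
apply/subsetP => u uN.
have [/(subsetP C_sub) // | uC] := boolP (u \in path_vertices k p).
have : u \in [set z] by rewrite -Dz inE uC.
by move=> /set1P ->; apply/path_verticesP; exists k.+1.
Qed.

Lemma hanging_path_next k p : #|nbhd e x| = 1 -> hanging_path k p -> k.+1 < #|T| ->
  exists z, nbhd e (p k) :\: path_vertices k p = [set z].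
Proof.
move=> deg_x [p0 p_inj p_adj p_closed] kT.
set C := path_vertices k p; set D := nbhd e (p k) :\: C.
have pC i : i <= k -> p i \in C by move=> ik; apply/path_verticesP; exists i.
have xC : x \in C by rewrite -p0 pC.
have [y yC] : exists y, y \notin C.
  have /subsetPn[y _ yC] : ~~ ([set: T] \subset C).
    apply: contraTN kT => /subset_leq_card; rewrite cardsT -leqNgt => TC.
    by apply: leq_trans TC _; rewrite -[k.+1]card_ord leq_imset_card.
  by exists y.
apply/cards1P; apply: contraT => D_ne1.
have fC : fort e (~: C).
  apply: fort_setC => [|_ /path_verticesP[i ik ->]].
    by apply/set0Pn; exists y; rewrite inE.
  case: (eqVneq i k) => [-> // | ink].
  rewrite (_ : _ :\: _ = set0) ?cards0 //; apply/eqP; rewrite setD_eq0.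
  by apply: p_closed; rewrite ltn_neqAle ink.
have [_ /path_verticesP[i ik ->] Ny] := pendant_outside xC fC yC.
have yNpi : y \in nbhd e (p i) by rewrite in_nbhd e_sym -in_nbhd Ny set11.
have ik' : i = k.
  apply/eqP; apply: contraNT yC => ink.
  by apply: (subsetP (p_closed i _)) yNpi; rewrite ltn_neqAle ink.
subst i; have D_gt1 : 1 < #|D|.
  by rewrite ltn_neqAle eq_sym D_ne1 card_gt0; apply/set0Pn; exists y; rewrite inE yC.
have [k0 | k_gt0] := posnP k.
  have := subset_leq_card (subsetDl (nbhd e (p k)) C).
  by rewrite -/D k0 p0 deg_x leqNgt D_gt1.
have pk1N : p k.-1 \in nbhd e (p k) by rewrite in_nbhd p_adj ?leq_pred ?prednK ?eqxx ?orbT.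
have deg_pk : #|nbhd e (p k)| != 2.
  have : #|p k.-1 |: D| <= #|nbhd e (p k)|.
    by apply: subset_leq_card; rewrite subUset sub1set pk1N subsetDl.
  rewrite cardsU1 inE pC ?leq_pred //= add1n.
  by move=> le_deg; apply/eqP => deg2; move: le_deg; rewrite deg2 ltnS leqNgt D_gt1.
have xypk : x \notin [set y; p k].
  rewrite !inE negb_or; apply/andP; split; first by apply: contraNneq yC => <-.
  rewrite -p0; apply/eqP => /p_inj; rewrite !inE => /(_ (leq0n k) (leqnn k)) k_eq0.
  by rewrite -k_eq0 in k_gt0.
by move: (no_separation_outside xC fC yC); rewrite (separates_of_pendant xypk Ny deg_pk).
Qed.

Lemma hanging_path_exists : #|nbhd e x| = 1 -> forall k, k < #|T| -> exists p, hanging_path k p.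
Proof.
move=> deg_x; elim=> [_ | k IH kT].
  exists (fun=> x); split=> // [i j | i j].
    by rewrite !inE !leqn0 => /eqP-> /eqP->.
  by rewrite !leqn0 => /eqP-> /eqP->; rewrite e_irr.
have [p p_hang] := IH (ltnW kT); have [z Dz] := hanging_path_next deg_x p_hang kT.
by exists (fun i => if i <= k then p i else z); apply: hanging_path_extend.
Qed.

Lemma hanging_path_iso n p : #|T| = n.+1 -> hanging_path n p -> graph_iso e (@path_rel n.+1).
Proof.
move=> cardT [_ p_inj p_adj _]; apply/graph_iso_ordP; exists (fun i : 'I_n.+1 => p i).
  apply: inj_card_bij; last by rewrite card_ord cardT.
  by move=> i j /p_inj; rewrite !inE => /(_ (ltn_ord i) (ltn_ord j)) /val_inj.
by move=> i j; apply: p_adj; rewrite -ltnS ltn_ord.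
Qed.

End Undominated.
End Forts.

Theorem theorem5p8 (T : finType) (e : rel T) (n : nat) :
  symmetric e -> irreflexive e -> #|T| = n -> 1 <= n ->
  (zir e = 1 <-> graph_iso e (@path_rel n) \/ graph_iso e (@star_rel n)).
Proof.
move=> e_sym e_irr; case: n => // n cardT _.
split=> [/zir_eq1P[x /maximal_ZIr_set1P undom] | iso]; last first.
  apply/zir_eq1P; case: iso => /graph_iso_ordP[g g_bij g_mono]; exists (g ord0).
    exact: path_end_maximal g_bij g_mono.
  exact: star_center_maximal g_bij g_mono.
have [deg_x | deg_x] := eqVneq #|nbhd e x| 1.
  left; have [|p p_hang] := hanging_path_exists e_sym e_irr undom deg_x (k := n).
    by rewrite cardT.
  exact: hanging_path_iso cardT p_hang.
by right; apply: star_iso cardT (star_of_undominated e_sym e_irr undom deg_x).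
Qed.
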